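(* Let $n\ge 1$, $r\ge 1$ be integers and let $v$ be a vertex of $G(n,r)$, with $d(v)$ its degree in $G(n,r)$. (a) If every positive entry of $v$ equals $r$ (i.e. $v=rP$ for a permutation matrix $P$), then $d(v)=\delta(G(n,r))=\binom{n}{2}$, where $\delta$ denotes the minimum degree. (b) If not every positive entry of $v$ equals $r$, then $d(v)\ge \frac{(n+2)(n-1)}{2}=\binom{n}{2}+n-1$.
   Context: For integers $n,r\ge 1$, $G(n,r)$ is the simple undirected graph whose vertices are the $n\times n$ matrices with non-negative integer entries all of whose row sums and column sums equal $r$. Let $e_{ij}$ be the $n\times n$ matrix with a $1$ in position $(i,j)$ and $0$ elsewhere, and let $\mathcal{B}=\{\pm(e_{ij}+e_{kl}-e_{il}-e_{kj}) : 1\le i<k\le n,\ 1\le j<l\le n\}$ (the Markov moves). Two vertices $u,v$ are adjacent iff $u-v\in\mathcal{B}$. Thus the degree $d(v)$ equals the number of moves $b\in\mathcal{B}$ with $v+b$ having all entries non-negative. *)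

From HB Require Import structures.
From mathcomp Require Import all_boot all_order all_algebra.
Set Implicit Arguments. Unset Strict Implicit. Unset Printing Implicit Defensive.
Import Order.TTheory GRing.Theory Num.Theory.

Definition is_vertex (n r : nat) (v : 'M[nat]_n) : Prop :=
  (forall i : 'I_n, \sum_(j < n) v i j = r) /\
  (forall j : 'I_n, \sum_(i < n) v i j = r).

Definition move (n : nat) (i j k l : 'I_n) : 'M[int]_n :=
  (delta_mx i j + delta_mx k l - delta_mx i l - delta_mx k j)%R.

Definition moves (n : nat) : seq 'M[int]_n :=
  undup (flatten (flatten (flatten (flatten
    [seq [seq [seq [seq [seq (s *: move i j k l)%R | s <- [:: 1%R; (-1)%R]]
                       | l : 'I_n <- [seq l : 'I_n <- enum 'I_n | (j < l)%N]]
                  | j : 'I_n <- enum 'I_n]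
             | k : 'I_n <- [seq k : 'I_n <- enum 'I_n | (i < k)%N]]
        | i : 'I_n <- enum 'I_n])))).

Definition to_int (n : nat) (v : 'M[nat]_n) : 'M[int]_n := map_mx Posz v.

Definition deg (n : nat) (v : 'M[nat]_n) : nat :=
  count (fun b : 'M[int]_n =>
           [forall i, forall j, (0 <= (to_int v + b) i j)%R]) (moves n).

Definition is_min_degree (n r m : nat) : Prop :=
  (exists w : 'M[nat]_n, is_vertex r w /\ deg w = m) /\
  (forall w : 'M[nat]_n, is_vertex r w -> m <= deg w).

From HB Require Import structures.
From mathcomp Require Import all_boot all_order all_algebra zify.
Set Implicit Arguments. Unset Strict Implicit. Unset Printing Implicit Defensive.
Import Order.TTheory GRing.Theory Num.Theory.

(* A move +-(e_ij + e_kl - e_il - e_kj), i < k, j < l, only touches rows i and k.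
   The move with sign +1 is applicable to v (keeps it non-negative) iff
   v_il > 0 and v_kj > 0, the move with sign -1 iff v_ij > 0 and v_kl > 0.
   Both cases say: "remove a unit at (i, a) and at (k, b)" for an ordered pair
   of distinct columns a <> b.  Since the enumeration [moves n] has no
   duplicates, this gives the degree formula
       deg v = \sum_(i < k) pair_degree v i k,
   where [pair_degree v i k] counts the pairs (a, b), a <> b, with v_ia > 0 and
   v_kb > 0.  For a vertex of G(n, r), every pair_degree is at least 1, it is
   at least 2 when row i has two positive entries, and at most 1 when every
   positive entry equals r.  Summing over the C(n, 2) pairs of rows gives (a);
   for (b), a row i0 with two positive entries contributes one extra unit to
   each of the n - 1 pairs of rows containing it. *)

Lemma sum_pos_witness (I : finType) (P : pred I) (F : I -> nat) :
  0 < \sum_(x | P x) F x -> exists2 x, P x & 0 < F x.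
Proof.
move=> /lt0n_neq0; rewrite sum_nat_eq0 negb_forall => /existsP [x].
by rewrite negb_imply -lt0n => /andP [Px Fx]; exists x.
Qed.

Lemma sum_le_single (I : finType) (P : pred I) (F : I -> nat) (y : I) (G : nat) :
  (forall x, P x -> F x <= (x == y) * G) -> \sum_(x | P x) F x <= G.
Proof.
move=> HF; apply: (@leq_trans (\sum_x (x == y) * G)).
  by rewrite [X in X <= _]big_mkcond; apply: leq_sum => x _; case: ifP => // /HF.
by rewrite (bigD1 y) //= eqxx mul1n big1 ?addn0 // => x /negbTE ->.
Qed.

Lemma count_mem_le1_uniq (T : eqType) (s : seq T) :
  (forall x, count_mem x s <= 1) -> uniq s.
Proof.
move=> H; apply: count_mem_uniq => x; case: (boolP (x \in s)) => [xs | /count_memPn //].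
by apply/eqP; rewrite eqn_leq H -has_count has_pred1.
Qed.

Lemma move_entry n (i j k l x y : 'I_n) : i != k -> j != l ->
  move i j k l x y =
  (if x == i then (if y == j then 1 else if y == l then -1 else 0)
   else if x == k then (if y == l then 1 else if y == j then -1 else 0) else 0)%R.
Proof.
move=> ik jl; rewrite !mxE.
case: (eqVneq x i) => [->|xi]; case: (eqVneq y j) => [->|yj] /=;
  rewrite ?(negbTE ik) ?(negbTE jl) ?andbF /=;
  by case: (x == k); case: (y == l).
Qed.

Ltac case_corners x y i j k l :=
  case: (eqVneq x i) => [?|?]; case: (eqVneq x k) => [?|?];
  case: (eqVneq y j) => [?|?]; case: (eqVneq y l) => [?|?]; subst;
  rewrite ?eqxx ?(negbTE ltac:(eassumption)) /=.

Definition applicable n (v : 'M[nat]_n) (b : 'M[int]_n) : bool :=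
  [forall x, forall y, (0 <= (to_int v + b) x y)%R].

Lemma applicable_entry n (v : 'M[nat]_n) (s : int) (b : 'M[int]_n) x y :
  (to_int v + s *: b)%R x y = ((v x y)%:Z + s * b x y)%R.
Proof. by rewrite !mxE. Qed.

Lemma applicable_plus n (v : 'M[nat]_n) (i j k l : 'I_n) : i != k -> j != l ->
  applicable v (1 *: move i j k l)%R = (0 < v i l) && (0 < v k j).
Proof.
move=> ik jl; apply/forallP/idP.
- move=> H; apply/andP; split.
  + move: (forallP (H i) l).
    by rewrite applicable_entry move_entry // !eqxx eq_sym (negbTE jl) /=; lia.
  + move: (forallP (H k) j).
    by rewrite applicable_entry move_entry // !eqxx eq_sym (negbTE ik) (negbTE jl) /=; lia.
- case/andP=> H1 H2 x; apply/forallP => y; rewrite applicable_entry move_entry //.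
  by case_corners x y i j k l; lia.
Qed.

Lemma applicable_minus n (v : 'M[nat]_n) (i j k l : 'I_n) : i != k -> j != l ->
  applicable v ((-1) *: move i j k l)%R = (0 < v i j) && (0 < v k l).
Proof.
move=> ik jl; apply/forallP/idP.
- move=> H; apply/andP; split.
  + by move: (forallP (H i) j); rewrite applicable_entry move_entry // !eqxx /=; lia.
  + move: (forallP (H k) l).
    by rewrite applicable_entry move_entry // !eqxx eq_sym (negbTE ik) /=; lia.
- case/andP=> H1 H2 x; apply/forallP => y; rewrite applicable_entry move_entry //.
  by case_corners x y i j k l; lia.
Qed.

Lemma move_support n (s : int) (i j k l x y : 'I_n) : i != k -> j != l -> s != 0%R ->
  ((s *: move i j k l)%R x y != 0%R) = ((x == i) || (x == k)) && ((y == j) || (y == l)).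
Proof.
move=> ik jl s0; rewrite mxE move_entry //.
by case_corners x y i j k l; rewrite ?mulr0 ?mulr1 ?mulrN1 ?oppr_eq0 ?eqxx //= ?(negbTE s0).
Qed.

Lemma move_inj n (s s' : int) (i j k l i' j' k' l' : 'I_n) :
  i < k -> j < l -> i' < k' -> j' < l' -> s != 0%R -> s' != 0%R ->
  (s *: move i j k l = s' *: move i' j' k' l')%R ->
  [/\ i = i', j = j', k = k', l = l' & s = s'].
Proof.
move=> ik jl ik' jl' s0 s0' E.
have neq_of_lt (a b : 'I_n) : a < b -> a != b by rewrite neq_ltn => ->.
have corners x y : ((x == i) || (x == k)) && ((y == j) || (y == l)) =
                   ((x == i') || (x == k')) && ((y == j') || (y == l')).
  by rewrite -(move_support x y (neq_of_lt _ _ ik) (neq_of_lt _ _ jl) s0) E move_support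
     ?neq_of_lt.
(* Evaluating at the corners gives {i, k} = {i', k'} and {j, l} = {j', l'};
   the orderings i < k, i' < k', j < l, j' < l' then force equality. *)
move: (corners i j) (corners k l) (corners i' j') (corners k' l'); rewrite !eqxx /= ?orbT /=.
move=> /esym /andP [/orP h1 /orP h2] /esym /andP [/orP h3 /orP h4]
       /andP [/orP h5 /orP h6] /andP [/orP h7 /orP h8].
have ei : i = i' by case: h1; case: h5 => /eqP e1 /eqP e2; subst; try done; lia.
have ek : k = k' by case: h3; case: h7 => /eqP e1 /eqP e2; subst; try done; lia.
have ej : j = j' by case: h2; case: h6 => /eqP e1 /eqP e2; subst; try done; lia.
have el : l = l' by case: h4; case: h8 => /eqP e1 /eqP e2; subst; try done; lia.
subst; split=> //.
have := congr1 (fun M : 'M[int]_n => M i' j') E.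
by rewrite mxE move_entry ?neq_of_lt // mxE move_entry ?neq_of_lt // !eqxx !mulr1.
Qed.

Definition move_list n : seq 'M[int]_n :=
  flatten (flatten (flatten (flatten
    [seq [seq [seq [seq [seq (s *: move i j k l)%R | s <- [:: 1%R; (-1)%R]]
                       | l : 'I_n <- [seq l : 'I_n <- enum 'I_n | (j < l)%N]]
                  | j : 'I_n <- enum 'I_n]
             | k : 'I_n <- [seq k : 'I_n <- enum 'I_n | (i < k)%N]]
        | i : 'I_n <- enum 'I_n]))).

Lemma moves_undup n : moves n = undup (move_list n).
Proof. by []. Qed.

Lemma count_move_list n (Q : pred 'M[int]_n) :
  count Q (move_list n) =
  \sum_(i < n) \sum_(k < n | i < k) \sum_(j < n) \sum_(l < n | j < l)
     (Q (1 *: move i j k l)%R + Q ((-1) *: move i j k l)%R).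
Proof.
rewrite /move_list count_flatten sumnE big_map !big_flatten /= big_map big_enum /=.
apply: eq_bigr => i _; rewrite big_map big_filter big_enum_cond /=.
apply: eq_bigr => k _; rewrite big_map big_enum /=.
apply: eq_bigr => j _; rewrite big_map big_filter big_enum_cond /=.
by apply: eq_bigr => l _; rewrite /= addn0.
Qed.

(* By [move_inj] no move is listed twice, so [undup] in [moves] is harmless. *)
Lemma move_list_uniq n : uniq (move_list n).
Proof.
apply: count_mem_le1_uniq => b; rewrite count_move_list.
set S := (X in X <= 1); have [-> // | ] := posnP S.
rewrite {}/S => /sum_pos_witness [i0 _ /sum_pos_witness [k0 ik0
  /sum_pos_witness [j0 _ /sum_pos_witness [l0 jl0 hit]]]].
have [s0 s0_nz ->] : exists2 s0 : int, s0 != 0%R & b = (s0 *: move i0 j0 k0 l0)%R.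
  move: hit => /=; case: eqP => [<- _|_]; first by exists 1%R.
  by case: eqP => [<- _|//]; exists (-1)%R.
apply: (@sum_le_single _ _ _ i0) => i _; apply: (@sum_le_single _ _ _ k0) => k ik.
apply: (@sum_le_single _ _ _ j0) => j _; apply: (@sum_le_single _ _ _ l0) => l jl /=.
have pm1_nz : ((-1 : int) != 0)%R by [].
case: eqP => [/esym E1|_]; case: eqP => [/esym E2|_] //=.
- have [_ _ _ _ s0_1] := move_inj ik0 jl0 ik jl s0_nz (oner_neq0 _) E1.
  by have [_ _ _ _] := move_inj ik0 jl0 ik jl s0_nz pm1_nz E2; rewrite s0_1.
- by have [-> -> -> -> _] := move_inj ik0 jl0 ik jl s0_nz (oner_neq0 _) E1; rewrite !eqxx.
- by have [-> -> -> -> _] := move_inj ik0 jl0 ik jl s0_nz pm1_nz E2; rewrite !eqxx.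
Qed.

Definition exchange_set n (v : 'M[nat]_n) (i k : 'I_n) : {set 'I_n * 'I_n} :=
  [set p | [&& p.1 != p.2, 0 < v i p.1 & 0 < v k p.2]].

Definition pair_degree n (v : 'M[nat]_n) (i k : 'I_n) : nat := #|exchange_set v i k|.

(* Splitting the pairs (a, b) according to a < b or b < a. *)
Lemma pair_degree_sum n (v : 'M[nat]_n) (i k : 'I_n) :
  pair_degree v i k =
  \sum_(j < n) \sum_(l < n | j < l)
     (((0 < v i l) && (0 < v k j) : nat) + ((0 < v i j) && (0 < v k l) : nat)).
Proof.
have -> : pair_degree v i k = \sum_(p | p.1 != p.2) ((0 < v i p.1) && (0 < v k p.2) : nat).
  rewrite /pair_degree -sum1_card big_mkcond [RHS]big_mkcond.
  by apply: eq_bigr => p _; rewrite inE; case: (p.1 != p.2).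
rewrite pair_big_dep big_split /= addnC [LHS](bigID (fun p : 'I_n * 'I_n => p.1 < p.2)) /=.
congr (_ + _); first by apply: eq_bigl => -[a b] /=; rewrite neq_ltn; case: ltngtP.
rewrite [LHS](reindex_inj (can_inj (@swap_pairK 'I_n 'I_n))) /=.
by apply: eq_bigl => -[a b] /=; rewrite neq_ltn; case: ltngtP.
Qed.

(* Swapping the two rows swaps the components of each exchange. *)
Lemma pair_degree_sym n (v : 'M[nat]_n) (i k : 'I_n) :
  pair_degree v i k = pair_degree v k i.
Proof.
rewrite /pair_degree -(card_preimset _ (can_inj swap_pairK)).
by apply: eq_card => -[a b]; rewrite !inE /= eq_sym [X in _ && X]andbC.
Qed.

Lemma deg_pair_degree n (v : 'M[nat]_n) :
  deg v = \sum_(i < n) \sum_(k < n | i < k) pair_degree v i k.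
Proof.
have -> : deg v = count (applicable v) (moves n) by [].
rewrite moves_undup undup_id ?move_list_uniq // count_move_list.
apply: eq_bigr => i _; apply: eq_bigr => k ik; rewrite pair_degree_sum.
apply: eq_bigr => j _; apply: eq_bigr => l jl.
by rewrite applicable_plus ?applicable_minus // neq_ltn ?ik ?jl.
Qed.

Lemma exchange_big_cond n (Q : 'I_n -> 'I_n -> bool) (F : 'I_n -> 'I_n -> nat) :
  \sum_(a < n) \sum_(b < n | Q a b) F a b = \sum_(b < n) \sum_(a < n | Q a b) F a b.
Proof.
under eq_bigr do rewrite big_mkcond.
by rewrite exchange_big /=; apply: eq_bigr => b _; rewrite [RHS]big_mkcond.
Qed.

Lemma count_ord_lt m k : \sum_(i < m | i < k) 1 = minn k m.
Proof.
rewrite -(big_mkord (fun i => i < k) (fun _ => 1)) big_mkcond /=.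
elim: m => [|m IH]; first by rewrite big_geq //; lia.
by rewrite big_nat_recr //= IH; case: ltnP => h; lia.
Qed.

Lemma count_ord_gt m i : \sum_(k < m | i < k) 1 = m - i.+1.
Proof.
rewrite -(big_mkord (fun k => i < k) (fun _ => 1)) big_mkcond /=.
elim: m => [|m IH]; first by rewrite big_geq.
by rewrite big_nat_recr //= IH; case: ltnP => h; lia.
Qed.

Lemma card_row_pairs n : \sum_(i < n) \sum_(k < n | i < k) 1 = 'C(n, 2).
Proof.
rewrite exchange_big_cond -bin2_sum big_mkord; apply: eq_bigr => k _.
by rewrite count_ord_lt; have := ltn_ord k; lia.
Qed.

Lemma card_row_pairs_through n (i0 : 'I_n) :
  \sum_(i < n) \sum_(k < n | i < k) ((i == i0) + (k == i0)) = n - 1.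
Proof.
have pick (F : 'I_n -> nat) : \sum_(i < n) (i == i0) * F i = F i0.
  by rewrite (bigD1 i0) //= eqxx mul1n big1 ?addn0 // => x /negbTE ->.
under eq_bigr do rewrite big_split /=.
rewrite big_split /= [X in _ + X]exchange_big_cond.
have -> : \sum_(i < n) \sum_(k < n | i < k) (i == i0 : nat) =
          \sum_(i < n) (i == i0) * \sum_(k < n | i < k) 1.
  by apply: eq_bigr => i _; rewrite big_distrr /=; apply: eq_bigr => k _; rewrite muln1.
have -> : \sum_(k < n) \sum_(i < n | i < k) (k == i0 : nat) =
          \sum_(k < n) (k == i0) * \sum_(i < n | i < k) 1.
  by apply: eq_bigr => k _; rewrite big_distrr /=; apply: eq_bigr => i _; rewrite muln1.
by rewrite !pick count_ord_lt count_ord_gt; have := ltn_ord i0; lia.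
Qed.

Section VertexRows.
Variables (n r : nat) (v : 'M[nat]_n).
Hypotheses (hr : 0 < r) (hv : is_vertex r v).

Lemma entry_le (i a : 'I_n) : v i a <= r.
Proof. by case: hv => /(_ i) <- _; rewrite (bigD1 a) //= leq_addr. Qed.

Lemma row_two (i a b : 'I_n) : a != b -> v i a + v i b <= r.
Proof.
move=> ab; case: hv => /(_ i) <- _.
by rewrite (bigD1 a) //= (bigD1 b) 1?eq_sym //= addnA leq_addr.
Qed.

Lemma col_two (i k a : 'I_n) : i != k -> v i a + v k a <= r.
Proof.
move=> ik; case: hv => _ /(_ a) <-.
by rewrite (bigD1 i) //= (bigD1 k) 1?eq_sym //= addnA leq_addr.
Qed.

Lemma row_pos (i : 'I_n) : exists a, 0 < v i a.
Proof.
have [|a _ pos] := @sum_pos_witness _ (fun _ => true) (v i); last by exists a.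
by case: hv => /(_ i) ->.
Qed.

Lemma row_other (i a : 'I_n) : v i a < r -> exists2 b, b != a & 0 < v i b.
Proof.
move=> lt_r; apply: sum_pos_witness; case: hv => /(_ i) + _.
by rewrite (bigD1 a) //= => E; rewrite -(ltn_add2l (v i a)) addn0 E.
Qed.

(* Two distinct rows always admit an exchange: if their positive entries meet in
   a single column a, then v_ia < r and row i has another positive entry. *)
Lemma pair_degree_gt0 (i k : 'I_n) : i != k -> 0 < pair_degree v i k.
Proof.
move=> ik; have [a ha] := row_pos i; have [b hb] := row_pos k; apply/card_gt0P.
case: (eqVneq a b) => [eab | nab]; last by exists (a, b); rewrite inE /= nab ha hb.
subst b; have [a' a'a ha'] : exists2 a', a' != a & 0 < v i a'.
  by apply: row_other; have := col_two a ik; lia.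
by exists (a', a); rewrite inE /= a'a ha' hb.
Qed.

Lemma pair_degree_gt1 (i k a1 a2 : 'I_n) : i != k -> a1 != a2 ->
  0 < v i a1 -> 0 < v i a2 -> 1 < pair_degree v i k.
Proof.
move=> ik a12 h1 h2; have [b hb] := row_pos k; apply/card_gt1P.
wlog ba2 : a1 a2 a12 h1 h2 / b != a2.
  move=> gen; case: (eqVneq b a2) => [eba2 | ba2]; last exact: gen a1 a2 a12 h1 h2 ba2.
  by apply: (gen a2 a1) => //; rewrite eq_sym // eba2.
case: (eqVneq b a1) => [eba1 | ba1].
- subst b; have [b' b'a1 hb'] : exists2 b', b' != a1 & 0 < v k b'.
    by apply: row_other; have := col_two a1 ik; lia.
  exists (a2, a1), (a1, b'); rewrite !inE /= xpair_eqE h1 h2 hb hb' !andbT.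
  by rewrite eq_sym a12 eq_sym b'a1 (negbTE a12).
- exists (a1, b), (a2, b); rewrite !inE /= xpair_eqE h1 h2 hb !andbT.
  by rewrite (negbTE a12) eq_sym ba1 eq_sym ba2.
Qed.

(* If every positive entry equals r, each row has a single positive entry, so
   there is at most one exchange between two rows. *)
Lemma pair_degree_le1 (i k : 'I_n) :
  (forall x y : 'I_n, 0 < v x y -> v x y = r) -> pair_degree v i k <= 1.
Proof.
move=> hall; have single x a a' : 0 < v x a -> 0 < v x a' -> a = a'.
  move=> ha ha'; apply/eqP; apply: contraT => aa'.
  by have := row_two x aa'; rewrite (hall _ _ ha) (hall _ _ ha'); lia.
have [a0 ha0] := row_pos i; have [b0 hb0] := row_pos k.
rewrite -(cards1 (a0, b0)); apply/subset_leq_card/subsetP => -[a b].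
by rewrite !inE /= => /and3P [_ ha hb]; rewrite (single _ _ _ ha ha0) (single _ _ _ hb hb0).
Qed.

(* Otherwise some entry lies strictly between 0 and r, and its row has a second
   positive entry. *)
Lemma two_positive_in_row : ~ (forall i j : 'I_n, 0 < v i j -> v i j = r) ->
  exists i0 a1 a2, [/\ a1 != a2, 0 < v i0 a1 & 0 < v i0 a2].
Proof.
move=> not_perm.
have [i0 [a1 [pos ne_r]]] : exists i0 a1, 0 < v i0 a1 /\ v i0 a1 != r.
  case: (boolP [exists i, exists j, (0 < v i j) && (v i j != r)]).
    by case/existsP => i /existsP [j /andP [pos ne_r]]; exists i, j.
  move=> none; exfalso; apply: not_perm => i j pos; apply/eqP; apply: contraNT none => ne_r.
  by apply/existsP; exists i; apply/existsP; exists j; rewrite pos ne_r.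
have [a2 a21 pos2] : exists2 a2, a2 != a1 & 0 < v i0 a2.
  by apply: row_other; rewrite ltn_neqAle ne_r entry_le.
by exists i0, a1, a2; rewrite eq_sym.
Qed.

Lemma deg_ge_binomial : 'C(n, 2) <= deg v.
Proof.
rewrite deg_pair_degree -card_row_pairs; apply: leq_sum => i _; apply: leq_sum => k ik.
by apply: pair_degree_gt0; rewrite neq_ltn ik.
Qed.

Lemma deg_permutation :
  (forall i j : 'I_n, 0 < v i j -> v i j = r) -> deg v = 'C(n, 2).
Proof.
move=> hall; apply/eqP; rewrite eqn_leq deg_ge_binomial andbT deg_pair_degree.
rewrite -card_row_pairs; apply: leq_sum => i _; apply: leq_sum => k _.
exact: pair_degree_le1.
Qed.

(* Part (b): each of the n - 1 pairs of rows through row i0 gains an exchange. *)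
Lemma deg_non_permutation :
  ~ (forall i j : 'I_n, 0 < v i j -> v i j = r) -> 'C(n, 2) + (n - 1) <= deg v.
Proof.
case/two_positive_in_row => i0 [a1 [a2 [a12 h1 h2]]].
rewrite deg_pair_degree -card_row_pairs -(card_row_pairs_through i0) -big_split /=.
apply: leq_sum => i _; rewrite -big_split /=; apply: leq_sum => k ik.
have ikn : i != k by rewrite neq_ltn ik.
case: (eqVneq i i0) => [ei | ni]; case: (eqVneq k i0) => [ek | nk] /=; subst.
- by rewrite eqxx in ikn.
- exact: pair_degree_gt1 ikn a12 h1 h2.
- by rewrite pair_degree_sym; apply: pair_degree_gt1 a12 h1 h2; rewrite eq_sym.
- exact: pair_degree_gt0.
Qed.

End VertexRows.

Lemma half_product_identity n : (n + 2) * (n - 1) %/ 2 = 'C(n, 2) + (n - 1).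
Proof.
have twice_bin : n * (n - 1) = 2 * 'C(n, 2) by rewrite -mul_bin_diag bin1 subn1.
suff -> : (n + 2) * (n - 1) = 2 * ('C(n, 2) + (n - 1)) by rewrite mulKn.
by rewrite mulnDl mulnDr -twice_bin.
Qed.

Theorem lemma2p1 (n r : nat) (hn : 1 <= n) (hr : 1 <= r)
  (v : 'M[nat]_n) (hv : is_vertex r v) :
  ((forall i j : 'I_n, 0 < v i j -> v i j = r) ->
     deg v = 'C(n, 2) /\ is_min_degree n r (deg v)) /\
  (~ (forall i j : 'I_n, 0 < v i j -> v i j = r) ->
     (n + 2) * (n - 1) %/ 2 <= deg v /\ (n + 2) * (n - 1) %/ 2 = 'C(n, 2) + (n - 1)).
Proof.
rewrite half_product_identity; split=> [perm | not_perm]; last first.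
  by split=> //; exact: deg_non_permutation hr hv not_perm.
have deg_v := deg_permutation hr hv perm.
split=> //; rewrite deg_v; split; first by exists v.
by move=> w hw; exact: deg_ge_binomial hr hw.
Qed.
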